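(* There is an absolute constant $C$ such that for all positive integers $k$ and $s$, $La^*([k]^2,\vee_s)\ge 2(s-1)k-Cs^2$.
   Context: $[k]^2$ is ordered coordinatewise. $\vee_s$ is the poset on $s+1$ elements $a,b_1,\dots,b_s$ whose only relations are $a<b_i$, $i=1,\dots,s$. For posets $P,R$, $P$ is a strong subposet of $R$ if there is an injection $i:P\to R$ with $p\le_P p'\iff i(p)\le_R i(p')$. A subset $F\subseteq Q$ is strong $P$-free if $P$ is not a strong subposet of $F$ with the induced order; $La^*(Q,P)$ is the maximum size of a strong $P$-free subset of $Q$. *)

From mathcomp Require Import all_boot all_order all_algebra.
Set Implicit Arguments. Unset Strict Implicit. Unset Printing Implicit Defensive.

Definition strong_subposet (P R : finType) (leP : rel P) (leR : rel R)
  (A : {set R}) : bool :=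
  [exists i : {ffun P -> R},
     [&& injectiveb i, [forall p, i p \in A]
       & [forall p, forall q, leP p q == leR (i p) (i q)]]].

Definition strong_free (P R : finType) (leP : rel P) (leR : rel R)
  (F : {set R}) : bool := ~~ strong_subposet leP leR F.

Definition La_star (P R : finType) (leP : rel P) (leR : rel R) : nat :=
  \max_(F : {set R} | strong_free leP leR F) #|F|.

(* The grid [k]^2 = {1..k}^2 (represented by 'I_k * 'I_k), coordinatewise. *)
Definition grid_le (k : nat) : rel ('I_k * 'I_k) :=
  fun x y => (x.1 <= y.1)%N && (x.2 <= y.2)%N.

(* The poset V_s on s+1 elements a, b_1..b_s: carrier option 'I_s with
   None = a, Some i = b_(i+1); only relations a < b_i (plus reflexivity). *)
Definition vee_le (s : nat) : rel (option 'I_s) :=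
  fun x y => (x == y) || (x == None).

From mathcomp Require Import all_boot all_order all_algebra.
From mathcomp Require Import zify.
Set Implicit Arguments.
Unset Strict Implicit.
Unset Printing Implicit Defensive.

Import Order.TTheory GRing.Theory Num.Theory.
Local Open Scope ring_scope.

(* Take all points of [k]^2 having a coordinate among the top m = s - 1
   values.  Above a point whose first coordinate is >= k - m, pairwise
   incomparable points have pairwise distinct first coordinates, so there are
   at most m < s of them (symmetrically for the second coordinate): the family
   is strong V_s-free.  It has k^2 - (k - m)^2 = 2mk - m^2 elements. *)

Lemma card_inj_in_interval (T : finType) (A : {pred T}) (f : T -> nat)
    (lo hi : nat) :
  {in A &, injective f} -> (forall x, x \in A -> lo <= f x < hi)%N ->
  (#|A| <= hi - lo)%N.
Proof.
move=> f_inj f_bound; rewrite cardE -(size_map f) -(size_iota lo (hi - lo)).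
apply: uniq_leq_size => [|_ /mapP[x Ax ->]].
  by rewrite map_inj_in_uniq ?enum_uniq // => x y; rewrite !mem_enum; apply: f_inj.
rewrite mem_enum in Ax; have := f_bound x Ax; rewrite mem_iota; lia.
Qed.

Lemma strong_subposet_vee (R : finType) (leR : rel R) (A : {set R}) (s : nat) :
  strong_subposet (@vee_le s) leR A ->
  exists a (b : 'I_s -> R),
    [/\ a \in A, forall j, leR a (b j) & forall j j', j != j' -> ~~ leR (b j) (b j')].
Proof.
case/existsP=> i /and3P[_ /forallP iA /forallP i_le].
have i_leE p q : leR (i p) (i q) = vee_le p q by rewrite (eqP (forallP (i_le p) q)).
exists (i None), (fun j => i (Some j)); split=> // [j | j j' neq_jj'].
  by rewrite i_leE /vee_le orbT.
by rewrite i_leE /vee_le orbF; apply: contra neq_jj' => /eqP[->].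
Qed.

Section ProductOrderAntichain.

Variables (T : Type) (le : rel T) (c d : T -> nat).
Hypothesis le_coord : forall x y, le x y = (c x <= c y)%N && (d x <= d y)%N.

Lemma antichain_above_card (s hi : nat) (a : T) (b : 'I_s -> T) :
  (forall j, c (b j) < hi)%N -> (forall j, le a (b j)) ->
  (forall j j', j != j' -> ~~ le (b j) (b j')) ->
  (s <= hi - c a)%N.
Proof.
move=> b_hi a_le_b b_anti; rewrite -[s]card_ord.
apply: (@card_inj_in_interval _ _ (c \o b)) => [j j' _ _ /= eq_c | j _ /=].
  apply/eqP; apply: contraT => neq_jj'.
  have := b_anti j j' neq_jj'; have := b_anti j' j; rewrite eq_sym => /(_ neq_jj').
  by rewrite !le_coord eq_c leqnn /= -!ltnNge => /ltn_trans lt_dd /lt_dd; rewrite ltnn.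
by rewrite b_hi andbT; move: (a_le_b j); rewrite le_coord => /andP[].
Qed.

End ProductOrderAntichain.

Definition grid_band (k m : nat) : {set 'I_k * 'I_k} :=
  [set x : 'I_k * 'I_k | (k - m <= x.1)%N || (k - m <= x.2)%N].

Lemma grid_band_free (k m s : nat) :
  (m < s)%N -> strong_free (@vee_le s) (@grid_le k) (grid_band k m).
Proof.
move=> lt_ms; apply/negP => /strong_subposet_vee[a [b [a_band a_le_b b_anti]]].
move: a_band; rewrite inE => /orP[] a_top.
- have le_coord (x y : 'I_k * 'I_k) :
      grid_le x y = (x.1 <= y.1)%N && (x.2 <= y.2)%N by [].
  have := antichain_above_card le_coord (fun j => ltn_ord (b j).1) a_le_b b_anti.
  lia.
- have le_coord (x y : 'I_k * 'I_k) :
      grid_le x y = (x.2 <= y.2)%N && (x.1 <= y.1)%N by rewrite andbC.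
  have := antichain_above_card le_coord (fun j => ltn_ord (b j).2) a_le_b b_anti.
  lia.
Qed.

Lemma card_grid_band (k m : nat) : (k * k - (k - m) * (k - m) <= #|grid_band k m|)%N.
Proof.
pose low := [set x : 'I_k | (x < k - m)%N].
have band_compl : ~: grid_band k m = setX low low.
  by apply/setP => x; rewrite !inE negb_or -!ltnNge.
have card_low : (#|low| <= k - m)%N.
  rewrite -[(k - m)%N]subn0.
  by apply: (@card_inj_in_interval _ _ val) => [x y _ _ /val_inj | x]; rewrite ?inE.
rewrite cardsCs band_compl cardsX card_prod card_ord.
by apply: leq_sub2l; apply: leq_mul.
Qed.

Lemma La_star_ge_card (P R : finType) (leP : rel P) (leR : rel R) (F : {set R}) :
  strong_free leP leR F -> (#|F| <= La_star leP leR)%N.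
Proof. exact: leq_bigmax_cond. Qed.

(* The subtraction [k - m] is truncated: for m > k the right side is k^2. *)
Lemma square_sub_square_ge (k m : nat) :
  2 * m%:Z * k%:Z - m%:Z ^+ 2 <= (k * k - (k - m) * (k - m))%N%:Z.
Proof. rewrite expr2; have [le_mk | lt_km] := leqP m k; nia. Qed.

Theorem theorem1p5 :
  exists C : int, forall k s : nat, (0 < k)%N -> (0 < s)%N ->
    (La_star (@vee_le s) (@grid_le k))%:Z >=
      2 * (s%:Z - 1) * k%:Z - C * s%:Z ^+ 2.
Proof.
exists 1 => k s _ s_gt0.
have lt_ms : (s.-1 < s)%N by rewrite prednK.
have := La_star_ge_card (grid_band_free k lt_ms).
move/(leq_trans (card_grid_band k s.-1)); rewrite -lez_nat => band_le.
apply: le_trans band_le; apply: le_trans (square_sub_square_ge k s.-1).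
have -> : s%:Z - 1 = s.-1%:Z by rewrite -subn1 subzn.
rewrite mul1r lerD2l lerN2 ler_pXn2r ?lez_nat ?leq_pred //.
Qed.
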